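(* For $n\ge 4$, the wheel $W_n$ satisfies $\nu^*(W_n)=\frac{13n^2+n}{2}$.
   Context: For a finite simple graph $G=(V,E)$ with $\ell=|V|+|E|$, a construction sequence (c-sequence) is a bijection $x:\{1,\dots,\ell\}\to V\sqcup E$ such that every edge $e=uw$ satisfies $x^{-1}(e)>\max\{x^{-1}(u),x^{-1}(w)\}$. The cost of $x$ is $\nu(x)=\sum_{e=uw\in E}\big(2x^{-1}(e)-x^{-1}(u)-x^{-1}(w)\big)$, and $\nu^*(G)$ is the maximum of $\nu(x)$ over all c-sequences for $G$. The wheel $W_n=C_n*K_1$ is the $(n+1)$-vertex graph obtained from the cycle $C_n$ by adding a hub vertex adjacent to all $n$ cycle vertices. *)

From mathcomp Require Import all_boot all_order all_algebra.
Set Implicit Arguments. Unset Strict Implicit. Unset Printing Implicit Defensive.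
Import GRing.Theory Num.Theory.

(* A finite simple graph is given by a vertex finType T and an adjacency
   relation adj; its edge set consists of the 2-element sets {u,w} with
   u <> w and adj u w (adjacency is required symmetric & irreflexive where
   used; the edge set below is insensitive to this anyway). *)
Definition edges (T : finType) (adj : rel T) : {set {set T}} :=
  [set e : {set T} | [exists u : T, exists w : T,
     [&& u != w, adj u w & e == [set u; w]]]].

Definition elem (T : finType) (adj : rel T) : finType :=
  (T + {e : {set T} | e \in edges adj})%type.

(* A construction sequence x : {1..l} -> V ⊔ E is represented by the list
   s = [x 1; ...; x l]; bijectivity = s is a permutation of all elements,
   and x^{-1}(a) = index a s + 1. *)
Definition pos (T : finType) (adj : rel T) (s : seq (elem adj)) (a : elem adj) : nat :=
  (index a s).+1.

Definition cseq (T : finType) (adj : rel T) (s : seq (elem adj)) : Prop :=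
  perm_eq s (enum (elem adj)) /\
  forall e : {e : {set T} | e \in edges adj}, forall v : T,
    v \in val e -> pos s (inl v) < pos s (inr e).

Definition cost (T : finType) (adj : rel T) (s : seq (elem adj)) : int :=
  \sum_(e : {e : {set T} | e \in edges adj})
     ((2 * pos s (inr e))%:Z - (\sum_(v in val e) pos s (inl v))%:Z)%R.

Definition nu_star_is (T : finType) (adj : rel T) (N : int) : Prop :=
  (exists s : seq (elem adj), cseq s /\ cost s = N) /\ (forall s : seq (elem adj), cseq s -> (cost s <= N)%R).

(* Wheel W_n on vertices 'I_(n+1): cycle vertices 0..n-1 (i ~ i+1 mod n),
   hub = n adjacent to all cycle vertices. *)
Definition wheel_adj (n : nat) : rel 'I_n.+1 :=
  fun i j => (i != j) &&
    [|| (i : nat) == n, (j : nat) == n, (i.+1 %% n == j) | (j.+1 %% n == i)].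

(* Every c-sequence is a permutation of the 3n+1 vertices and edges, so the
   positions of all elements sum to (3n+1)(3n+2)/2.  A rim vertex lies on three
   edges and the hub on n, hence for V the sum of the vertex positions and h the
   position of the hub the cost equals (3n+1)(3n+2) - 5 V - (n - 3) h.  Since the
   n+1 vertex positions are distinct, V >= (n+1)(n+2)/2, and h >= 1; both bounds
   are attained by listing the hub, then the rim vertices, then all edges. *)

From mathcomp Require Import all_boot all_order all_algebra.
From mathcomp Require Import zify.
Import GRing.Theory.
Set Implicit Arguments. Unset Strict Implicit. Unset Printing Implicit Defensive.

Lemma double_sum_succ k : 2 * \sum_(0 <= i < k) i.+1 = k * k.+1.
Proof.
elim: k => [|k IHk]; first by rewrite big_geq.
by rewrite big_nat_recr //= mulnDr IHk; lia.
Qed.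

Lemma sumn_sorted_ltn_lb k r : sorted ltn r -> all (leq k) r ->
  2 * k * size r + size r * (size r).-1 <= 2 * sumn r.
Proof.
elim: r k => [|x r IHr] k /=; first by rewrite !muln0.
move=> sorted_xr /andP[le_kx _].
have sorted_r : sorted ltn r := path_sorted sorted_xr.
have gt_x_r : all (leq k.+1) r.
  apply/allP => y y_r; apply: leq_ltn_trans le_kx _.
  exact: allP (order_path_min ltn_trans sorted_xr) y y_r.
have := IHr _ sorted_r gt_x_r.
case: (size r) => [|m] /=; lia.
Qed.

Lemma sumn_uniq_lb r : uniq r -> size r * (size r).-1 <= 2 * sumn r.
Proof.
move=> uniq_r; set r' := sort leq r.
have sorted_r' : sorted ltn r' by rewrite ltn_sorted_uniq_leq sort_uniq uniq_r sort_sorted.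
have ge0_r' : all (leq 0) r' by apply/allP.
have := sumn_sorted_ltn_lb sorted_r' ge0_r'.
by rewrite (perm_sumn (permEl (perm_sort leq r))) size_sort mul0n add0n.
Qed.

Section Positions.
Variable X : finType.

Lemma sum_injective_lb (f : X -> nat) : injective f ->
  #|X| * #|X|.-1 <= 2 * \sum_x f x.
Proof.
move=> inj_f; have uniq_fX : uniq (map f (enum X)) by rewrite map_inj_uniq ?enum_uniq.
by have := sumn_uniq_lb uniq_fX; rewrite size_map -cardE sumnE big_map big_enum.
Qed.

Lemma sum_index_perm (s : seq X) : perm_eq s (enum X) ->
  2 * \sum_x (index x s).+1 = #|X| * #|X|.+1.
Proof.
move=> perm_s; have uniq_s : uniq s by rewrite (perm_uniq perm_s) enum_uniq.
rewrite -big_enum (perm_big s) 1?perm_sym // cardE -(perm_size perm_s).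
case: s uniq_s {perm_s} => [|x0 s] uniq_s; first by rewrite big_nil.
rewrite (big_nth x0) -double_sum_succ !big_nat.
by congr (2 * _); apply: eq_bigr => i /andP[_ lt_i]; rewrite index_uniq.
Qed.

End Positions.

Section ConstructionSequences.
Variables (T : finType) (adj : rel T).
Local Notation E := {e : {set T} | e \in edges adj}.
Implicit Types (s : seq (elem adj)) (vs : seq T).

Lemma cost_split s : cost s =
  (Posz (2 * \sum_(e : E) pos s (inr e)) - Posz (\sum_(e : E) \sum_(v in val e) pos s (inl v)))%R.
Proof. by rewrite /cost sumrB -!(big_morph Posz PoszD (erefl (Posz 0))) big_distrr. Qed.

Lemma sum_pos_perm s : perm_eq s (enum (elem adj)) ->
  2 * (\sum_v pos s (inl v) + \sum_(e : E) pos s (inr e)) = #|elem adj| * #|elem adj|.+1.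
Proof. by move=> perm_s; rewrite -(big_sumType _ predT); exact: sum_index_perm. Qed.

Lemma sum_pos_vertices_lb s : perm_eq s (enum (elem adj)) ->
  #|T| * #|T|.+1 <= 2 * \sum_v pos s (inl v).
Proof.
move=> perm_s.
have s_all (a : elem adj) : a \in s by rewrite (perm_mem perm_s) mem_enum.
have inj_index : injective (fun v => index (inl v : elem adj) s).
  by move=> u v /(index_inj (inl u) (s_all _) (s_all _)) [].
have := sum_injective_lb inj_index.
under [\sum_v pos s _]eq_bigr do rewrite /pos -addn1.
rewrite big_split sum_nat_const /=; case: #|T| => //= k; lia.
Qed.

Definition vertices_first vs : seq (elem adj) := map inl vs ++ map inr (enum (@predT E)).

Lemma pos_vertices_first_inl vs v : v \in vs ->
  pos (vertices_first vs) (inl v) = (index v vs).+1.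
Proof.
by move=> vs_v; rewrite /pos index_cat (index_map inl_inj) mem_map ?vs_v //; exact: inl_inj.
Qed.

Lemma vertices_first_perm vs : perm_eq vs (enum T) ->
  perm_eq (vertices_first vs) (enum (elem adj)).
Proof.
move=> perm_vs; apply: uniq_perm; rewrite ?enum_uniq //.
  rewrite cat_uniq (map_inj_uniq inl_inj) (map_inj_uniq inr_inj).
  rewrite (perm_uniq perm_vs) !enum_uniq andbT /=.
  by apply/hasPn => _ /mapP[e _ ->]; apply/mapP => -[].
move=> [v|e]; rewrite mem_enum mem_cat.
  by rewrite map_f // (perm_mem perm_vs) mem_enum.
by rewrite orbC map_f ?mem_enum.
Qed.

Lemma cseq_vertices_first vs : perm_eq vs (enum T) -> cseq (vertices_first vs).
Proof.
move=> perm_vs; split; first exact: vertices_first_perm.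
move=> e v _; have vs_v : v \in vs by rewrite (perm_mem perm_vs) mem_enum.
rewrite pos_vertices_first_inl // /pos index_cat.
have -> : (inr e : elem adj) \in map inl vs = false by apply/mapP => -[].
by rewrite size_map ltnS ltn_addr // index_mem.
Qed.

Lemma sum_pos_vertices_first vs : perm_eq vs (enum T) ->
  2 * \sum_v pos (vertices_first vs) (inl v) = #|T| * #|T|.+1.
Proof.
move=> perm_vs; rewrite -(sum_index_perm perm_vs); congr (2 * _).
by apply: eq_bigr => v _; rewrite pos_vertices_first_inl // (perm_mem perm_vs) mem_enum.
Qed.

End ConstructionSequences.

Section Wheel.
Variable n : nat.
Hypothesis n_gt2 : 2 < n.

Local Notation hub := (@ord_max n).
Local Notation E := {e : {set 'I_n.+1} | e \in edges (@wheel_adj n)}.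
Implicit Types i j : 'I_n.

Definition cyc (i : 'I_n) : 'I_n.+1 := lift hub i.
Definition spoke (i : 'I_n) : {set 'I_n.+1} := [set cyc i; hub].
Definition rim (i : 'I_n) : {set 'I_n.+1} := [set cyc i; cyc (ordS i)].

Lemma val_cyc i : cyc i = i :> nat.
Proof. exact: lift_max. Qed.

Lemma cyc_inj : injective cyc.
Proof. exact: lift_inj. Qed.

Lemma cyc_neq_hub i : (cyc i == hub) = false.
Proof. by rewrite eq_sym; apply/negbTE/neq_lift. Qed.

Lemma val_ordS i : val (ordS i) = if i.+1 == n then 0 else i.+1.
Proof.
rewrite /=; case: eqP => [->|ne_n]; first exact: modnn.
by apply: modn_small; have := ltn_ord i; lia.
Qed.

Lemma ordS_neq i : (ordS i == i) = false.
Proof. by apply/negbTE; rewrite -val_eqE val_ordS /=; have [] := eqVneq i.+1 n; lia. Qed.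

Lemma ordS2_neq i : (ordS (ordS i) == i) = false.
Proof.
apply/negbTE; rewrite -val_eqE !val_ordS /=; have := ltn_ord i.
by have [Si | nSi] := eqVneq i.+1 n; case: ifP => /eqP; lia.
Qed.

Lemma spoke_inj : injective spoke.
Proof.
move=> i j /setP/(_ (cyc i)).
by rewrite !inE eqxx cyc_neq_hub (inj_eq cyc_inj) !orbF => /esym/eqP.
Qed.

Lemma rim_inj : injective rim.
Proof.
move=> i j eq_rim.
have := eq_rim => /setP/(_ (cyc i)); rewrite !inE eqxx !(inj_eq cyc_inj) /=.
case/esym/orP => [/eqP // | /eqP i_Sj].
have := eq_rim => /setP/(_ (cyc j)); rewrite !inE eqxx !(inj_eq cyc_inj) /=.
by rewrite i_Sj !(eq_sym j) ordS_neq ordS2_neq.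
Qed.

Lemma spoke_neq_rim i j : spoke i != rim j.
Proof.
apply/negP => /eqP/setP/(_ hub); rewrite !inE eqxx /=.
by rewrite !(eq_sym hub) !cyc_neq_hub.
Qed.

Lemma edges_wheel :
  edges (@wheel_adj n) = [set spoke i | i : 'I_n] :|: [set rim i | i : 'I_n].
Proof.
apply/setP => e; rewrite !inE; apply/idP/idP.
  case/existsP=> u /existsP[w /and3P[ne_uw]]; rewrite /wheel_adj ne_uw /= => adj_uw /eqP->.
  case: (unliftP hub u) => [i|] -> {u} in ne_uw adj_uw *;
    case: (unliftP hub w) => [j|] -> {w} in ne_uw adj_uw *.
  - rewrite !val_cyc !(ltn_eqF (ltn_ord _)) /= in adj_uw.
    apply/orP; right; case/orP: adj_uw => /eqP S_ij; apply/imsetP.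
      by exists i => //; congr [set _; cyc _]; apply: val_inj.
    by exists j; rewrite // setUC; congr [set _; cyc _]; apply: val_inj.
  - by apply/orP; left; apply/imsetP; exists i.
  - by apply/orP; left; apply/imsetP; exists j; rewrite // setUC.
  - by rewrite eqxx in ne_uw.
case/orP=> /imsetP[i _ ->]; apply/existsP; exists (cyc i); apply/existsP.
  by exists hub; rewrite /spoke /wheel_adj cyc_neq_hub /= !eqxx orbT.
exists (cyc (ordS i)); rewrite /rim /wheel_adj (inj_eq cyc_inj) eq_sym ordS_neq.
by rewrite !val_cyc !eqxx !orbT.
Qed.

Lemma sum_edges_wheel (F : {set 'I_n.+1} -> nat) :
  \sum_(e in edges (@wheel_adj n)) F e = \sum_(i < n) F (spoke i) + \sum_(i < n) F (rim i).
Proof.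
rewrite edges_wheel; set S := spoke @: _; set R := rim @: _.
have disj_SR : [disjoint S & R].
  apply/pred0P => e /=; apply/andP => -[/imsetP[i _ ->] /imsetP[j _ /eqP]].
  by rewrite (negbTE (spoke_neq_rim _ _)).
rewrite (eq_bigl [predU S & R]) => [|e]; last by rewrite !inE.
by rewrite bigU // !big_imset // => i j _ _; [exact: rim_inj | exact: spoke_inj].
Qed.

Lemma card_edges_wheel : #|edges (@wheel_adj n)| = 2 * n.
Proof. by rewrite -sum1_card sum_edges_wheel !sum1_card card_ord addnn mul2n. Qed.

Lemma card_elem_wheel : #|elem (@wheel_adj n)| = 3 * n + 1.
Proof. by rewrite card_sum card_ord card_sig card_edges_wheel; lia. Qed.

Lemma sum_incidence_wheel (g : 'I_n.+1 -> nat) :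
  \sum_(e : E) \sum_(v in val e) g v + 3 * g hub = 3 * \sum_v g v + n * g hub.
Proof.
have sum_pair a b : a != b -> \sum_(v in [set a; b]) g v = g a + g b.
  by move=> ne_ab; rewrite big_setU1 ?big_set1 ?inE.
have sum_spoke i : \sum_(v in spoke i) g v = g (cyc i) + g hub.
  by rewrite sum_pair ?cyc_neq_hub.
have sum_rim i : \sum_(v in rim i) g v = g (cyc i) + g (cyc (ordS i)).
  by rewrite sum_pair // (inj_eq cyc_inj) eq_sym ordS_neq.
rewrite -(big_sub _ (fun e : {set 'I_n.+1} => \sum_(v in e) g v)) sum_edges_wheel.
rewrite (eq_bigr _ (fun i _ => sum_spoke i)) (eq_bigr _ (fun i _ => sum_rim i)).
have sum_vertices : \sum_v g v = \sum_(i < n) g (cyc i) + g hub.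
  rewrite big_ord_recr; congr (_ + _); apply: eq_bigr => i _.
  by congr g; apply: val_inj; exact: esym (val_cyc i).
rewrite sum_vertices !big_split sum_nat_const card_ord /=.
have sum_ordS : \sum_(i < n) g (cyc (ordS i)) = \sum_(i < n) g (cyc i).
  by rewrite [RHS](reindex_inj (@ordS_inj n)).
by rewrite sum_ordS; set S := \sum_(i < n) g (cyc i); lia.
Qed.

Lemma cost_wheel s : perm_eq s (enum (elem (@wheel_adj n))) ->
  cost s = (Posz ((3 * n + 1) * (3 * n + 2)) - Posz (5 * \sum_v pos s (inl v))
            - Posz ((n - 3) * pos s (inl hub)))%R.
Proof.
move=> perm_s; rewrite cost_split.
have := sum_pos_perm perm_s; rewrite card_elem_wheel.
have := sum_incidence_wheel (fun v => pos s (inl v)).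
set V := \sum_v _; set D := \sum_e _; set A := \sum_e _; set h := pos s _.
have : (n - 3) * h + 3 * h = n * h by rewrite -mulnDl subnK.
lia.
Qed.

Lemma nu_star_wheel q : 2 * q = 13 * n ^ 2 + n -> nu_star_is (@wheel_adj n) (Posz q).
Proof.
move=> def_q; split.
  set vs := hub :: rem hub (enum 'I_n.+1).
  have perm_vs : perm_eq vs (enum 'I_n.+1) by rewrite perm_sym perm_to_rem ?mem_enum.
  exists (vertices_first (@wheel_adj n) vs); split; first exact: cseq_vertices_first.
  rewrite cost_wheel ?vertices_first_perm //.
  have := sum_pos_vertices_first (@wheel_adj n) perm_vs; rewrite card_ord.
  rewrite pos_vertices_first_inl ?mem_head //= eqxx; nia.
move=> s [perm_s _]; rewrite cost_wheel //.
have := sum_pos_vertices_lb perm_s; rewrite card_ord.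
have : 0 < pos s (inl hub) by [].
nia.
Qed.

End Wheel.

Theorem theorem7 (n : nat) : (4 <= n)%N ->
  nu_star_is (@wheel_adj n) (Posz ((13 * n ^ 2 + n) %/ 2)%N) /\ ~~ odd (13 * n ^ 2 + n)%N.
Proof.
move=> n_ge4.
have even_num : ~~ odd (13 * n ^ 2 + n) by rewrite oddD oddM oddX /=; case: (odd n).
split => //; apply: nu_star_wheel; first exact: ltnW.
by rewrite mulnC divnK // dvdn2.
Qed.
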